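(* Let $G$ be a Lie group, $\mathfrak s\subset\mathfrak g$ a vector subspace, $\varphi:G\to GL(N,\mathbb R)$ a Lie group homomorphism, let $G$ act on $\mathbb R^N\setminus\{0\}$ by $g\cdot x=\varphi(g)x$, and let $\nabla$ be the standard flat affine connection on $\mathbb R^N\setminus\{0\}$. Then for both signs, \[\rho^{\pm}_{G,\mathfrak s}(\mathbb R^N\setminus\{0\},\varphi,\nabla)\le\rho_{G,\mathfrak s}(\mathbb R^N\setminus\{0\},\varphi).\]
   Context: The standard flat connection: $\nabla_X\big(\sum_k f_k\partial/\partial x_k\big)=\sum_k(Xf_k)\partial/\partial x_k$. For $A\in\mathfrak g$, $X_A(p):=(d\sigma_p)_e(A)$ is the fundamental vector field, $\sigma_p(g)=\sigma(g,p)$; $\nabla X$ is the endomorphism $Y\mapsto\nabla_YX$, and $\nabla^M\mathfrak s:=\{\nabla X_A\mid A\in\mathfrak s\}$. $Cl^+_n:=Cl_n$ is the unital real algebra generated by $e_1,\dots,e_n$ with $e_ie_j+e_je_i=-2\delta_{ij}$, and $Cl^-_n:=Cl_{0,n}$ the one with $e_ie_j+e_je_i=2\delta_{ij}$. $\rho^\epsilon_{G,\mathfrak s}(M,\sigma,\nabla)$ is the largest $n$ for which there is a unital $\mathbb R$-algebra homomorphism $f:Cl^\epsilon_n\to\mathrm{End}_{C^\infty(M)}(\mathfrak X(M))$ with $f(e_i)\in\nabla^M\mathfrak s$ for all $i$. $\rho_{G,\mathfrak s}(M,\sigma)$ is the largest $n$ such that there exist $n$ fundamental vector fields $X_{A_1},\dots,X_{A_n}$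 with $A_i\in\mathfrak s$ that are linearly independent at every point of $M$. *)

From HB Require Import structures.
From mathcomp Require Import all_boot all_order all_algebra.
From mathcomp Require Import all_classical all_reals all_analysis.

Set Implicit Arguments.
Unset Strict Implicit.
Unset Printing Implicit Defensive.

Import Order.TTheory GRing.Theory Num.Theory.
Import numFieldNormedType.Exports.
Local Open Scope classical_set_scope.
Local Open Scope ring_scope.

Definition is_lie_bracket (R : realType) (g : vectType R) (br : g -> g -> g) :=
  [/\ forall a x y z, br (a *: x + y) z = a *: br x z + br y z,
      forall a x y z, br z (a *: x + y) = a *: br z x + br z y,
      forall x, br x x = 0
    & forall x y z, br x (br y z) + br y (br z x) + br z (br x y) = 0].

(* [dphi] is a Lie algebra homomorphism g -> gl(N,R)
   (it plays the role of the differential (d phi)_e of phi : G -> GL(N,R)). *)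
Definition is_lie_hom (R : realType) (g : vectType R) (br : g -> g -> g)
    (N : nat) (dphi : g -> 'M[R]_N) :=
  (forall a x y, dphi (a *: x + y) = a *: dphi x + dphi y) /\
  (forall x y, dphi (br x y) = dphi x *m dphi y - dphi y *m dphi x).

Definition punctured (R : realType) (N : nat) : set 'cV[R]_N := [set p | p != 0].

Fixpoint iter_partial (R : realType) (N : nat) (l : seq 'I_N)
    (Y : 'cV[R]_N -> 'cV[R]_N) : 'cV[R]_N -> 'cV[R]_N :=
  match l with
  | [::] => Y
  | i :: l' => fun p => 'D_(delta_mx i 0) (iter_partial l' Y) p
  end.

Definition smooth_on (R : realType) (N : nat) (U : set 'cV[R]_N)
    (Y : 'cV[R]_N -> 'cV[R]_N) :=
  forall (l : seq 'I_N) (p : 'cV[R]_N), U p ->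
    {for p, continuous (iter_partial l Y)} /\
    forall i : 'I_N, derivable (iter_partial l Y) p (delta_mx i 0).

(* Smooth vector fields on M = R^N \ {0}: elements of X(M) (two such are equal
   when they agree on M). *)
Definition vector_field (R : realType) (N : nat) (Y : 'cV[R]_N -> 'cV[R]_N) :=
  smooth_on (@punctured R N) Y.

Definition flat_nabla (R : realType) (N : nat) (Y X : 'cV[R]_N -> 'cV[R]_N) :
  'cV[R]_N -> 'cV[R]_N := fun p => 'D_(Y p) X p.

Definition nabla_end (R : realType) (N : nat) (X : 'cV[R]_N -> 'cV[R]_N) :
  ('cV[R]_N -> 'cV[R]_N) -> ('cV[R]_N -> 'cV[R]_N) := fun Y => flat_nabla Y X.

(* fundamental vector field of A for the linear action g.x = phi(g) x:
   X_A(p) = (d sigma_p)_e(A) = (d phi)_e(A) p *)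
Definition fund (R : realType) (g : vectType R) (N : nat) (dphi : g -> 'M[R]_N)
    (A : g) : 'cV[R]_N -> 'cV[R]_N := fun p => dphi A *m p.

(* sign: Cl^+_n has e_i e_j + e_j e_i = -2 delta_ij, Cl^-_n has +2 delta_ij;
   eps = true encodes "+", eps = false encodes "-". *)
Definition cl_sign (R : realType) (eps : bool) : R := if eps then -1 else 1.

(* There is a unital R-algebra homomorphism f : Cl^eps_n -> End_{C^oo(M)}(X(M))
   with f(e_i) in nabla^M s.  By the presentation of Cl^eps_n by generators e_i
   and relations, this means: there are A_1..A_n in s such that the endomorphisms
   E_i = nabla X_{A_i} satisfy E_i E_j + E_j E_i = -/+ 2 delta_ij id on X(M). *)
Definition clifford_rep_in (R : realType) (g : vectType R) (N : nat)
    (dphi : g -> 'M[R]_N) (s : {vspace g}) (eps : bool) (n : nat) :=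
  exists A : 'I_n -> g, (forall i, A i \in s) /\
    forall (i j : 'I_n) (Y : 'cV[R]_N -> 'cV[R]_N), vector_field Y ->
      forall p : 'cV[R]_N, p != 0 ->
        nabla_end (fund dphi (A i)) (nabla_end (fund dphi (A j)) Y) p
        + nabla_end (fund dphi (A j)) (nabla_end (fund dphi (A i)) Y) p
        = (2 * @cl_sign R eps * (i == j)%:R) *: Y p.

Definition indep_fund_fields (R : realType) (g : vectType R) (N : nat)
    (dphi : g -> 'M[R]_N) (s : {vspace g}) (n : nat) :=
  exists A : 'I_n -> g, (forall i, A i \in s) /\
    forall p : 'cV[R]_N, p != 0 ->
      forall c : 'I_n -> R, \sum_(i < n) c i *: fund dphi (A i) p = 0 ->
        forall i, c i = 0.

From HB Require Import structures.
From mathcomp Require Import all_boot all_order all_algebra.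
From mathcomp Require Import all_classical all_reals all_analysis.

(* For the flat connection, nabla X_A acts on vector fields pointwise as
   Y |-> dphi(A) Y.  Tested on constant fields, the Clifford relations for the
   nabla X_(A_i) therefore say that the matrices M_i = dphi(A_i) satisfy
   M_i M_j p + M_j M_i p = -/+ 2 delta_ij p at every point p != 0.  Hence
   (sum_i c_i M_i)^2 p = -/+ |c|^2 p, so sum_i c_i X_(A_i)(p) = (sum_i c_i M_i) p
   vanishes only for c = 0. *)

Set Implicit Arguments.
Unset Strict Implicit.
Unset Printing Implicit Defensive.
Import GRing.Theory Num.Theory.
Import numFieldNormedType.Exports.
Local Open Scope classical_set_scope.
Local Open Scope ring_scope.

Section CliffordMatrices.
Variables (R : realFieldType) (N n : nat) (M : 'I_n -> 'M[R]_N) (p : 'cV[R]_N).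
Variable k : R.
Hypothesis anticomm : forall i j,
  M i *m (M j *m p) + M j *m (M i *m p) = (2 * k * (i == j)%:R) *: p.

Lemma clifford_mx_comb (c : 'I_n -> R) :
  let Mc := \sum_i c i *: M i in
  Mc *m (Mc *m p) = (k * \sum_i c i ^+ 2) *: p.
Proof.
move=> Mc; set B := fun i j => (c i * c j) *: (M i *m (M j *m p)).
have McE : Mc *m (Mc *m p) = \sum_i \sum_j B i j.
  rewrite /Mc mulmx_suml; apply: eq_bigr => i _.
  rewrite -scalemxAl mulmx_suml mulmx_sumr scaler_sumr; apply: eq_bigr => j _.
  by rewrite -scalemxAl -scalemxAr scalerA.
have symB i j : B i j + B j i = (2 * k * c i ^+ 2 * (i == j)%:R) *: p.
  rewrite /B [c j * c i]mulrC -scalerDr anticomm scalerA.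
  by case: eqP => [->|_]; rewrite ?mulr0 // !mulr1 expr2 mulrC.
apply: (@scalerI _ _ 2); first by rewrite pnatr_eq0.
rewrite McE scaler_nat mulr2n {2}exchange_big -big_split /=.
rewrite scalerA mulrA mulr_sumr scaler_suml; apply: eq_bigr => i _.
rewrite -big_split /= (bigD1 i) //= big1 => [|j /negbTE ji]; last first.
  by rewrite symB eq_sym ji mulr0 scale0r.
by rewrite addr0 symB eqxx mulr1.
Qed.

Lemma clifford_mx_free (c : 'I_n -> R) :
  k != 0 -> p != 0 -> \sum_i c i *: (M i *m p) = 0 -> forall i, c i = 0.
Proof.
move=> k0 p0 comb0 i.
have Mcp0 : (\sum_i c i *: M i) *m p = 0.
  by rewrite mulmx_suml -[RHS]comb0; apply: eq_bigr => j _; rewrite scalemxAl.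
have /eqP := clifford_mx_comb c; rewrite Mcp0 mulmx0 eq_sym scaler_eq0.
rewrite (negbTE p0) orbF mulf_eq0 (negbTE k0) /= => /eqP sqr0.
have /eqP := psumr_eq0P (fun j _ => sqr_ge0 (c j)) sqr0 (i := i) isT.
by rewrite sqrf_eq0 => /eqP.
Qed.

End CliffordMatrices.

Lemma derive_linear (R : numFieldType) (V W : normedModType R)
    (f : {linear V -> W}) (p v : V) :
  'D_v f p = f v.
Proof.
rewrite /derive; apply: cvg_lim => //.
apply: (@cvg_trans _ (cst (f v) @ 0^')); last exact: cvg_cst.
apply: near_eq_cvg; near=> h.
rewrite /= /shift [f (_ + _)]linearD addrK linearZ scalerA mulVf ?scale1r //.
near: h; exact: nbhs_dnbhs_neq.
Unshelve. all: by end_near.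
Qed.

Lemma iter_partial_cst (R : realType) (N : nat) (l : seq 'I_N) (w : 'cV[R]_N) :
  exists c, iter_partial l (cst w) = cst c.
Proof.
elim: l => [|i l [c IH]] /=; first by exists w.
by exists 0; rewrite IH; apply/funext => q; exact: derive_cst.
Qed.

Lemma vector_field_cst (R : realType) (N : nat) (w : 'cV[R]_N) :
  vector_field (cst w).
Proof.
move=> l p _; have [c ->] := iter_partial_cst l w.
by split=> [|i]; [exact: cst_continuous | exact: derivable_cst].
Qed.

Lemma nabla_end_fund (R : realType) (g : vectType R) (N : nat)
    (dphi : g -> 'M[R]_N) (A : g) (Y : 'cV[R]_N -> 'cV[R]_N) :
  nabla_end (fund dphi A) Y = fun p => dphi A *m Y p.
Proof. by apply/funext => p; exact: (derive_linear (mulmx (dphi A))). Qed.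

Lemma clifford_rep_anticomm (R : realType) (g : vectType R) (N : nat)
    (dphi : g -> 'M[R]_N) (s : {vspace g}) (eps : bool) (n : nat) :
  clifford_rep_in dphi s eps n ->
  exists A : 'I_n -> g, (forall i, A i \in s) /\
    forall p : 'cV[R]_N, p != 0 -> forall i j,
      dphi (A i) *m (dphi (A j) *m p) + dphi (A j) *m (dphi (A i) *m p)
      = (2 * cl_sign R eps * (i == j)%:R) *: p.
Proof.
move=> [A [As cliff]]; exists A; split=> // p p0 i j.
by have := cliff i j _ (vector_field_cst p) p p0; rewrite !nabla_end_fund.
Qed.

Lemma cl_sign_neq0 (R : realType) (eps : bool) : cl_sign R eps != 0.
Proof. by case: eps; rewrite /cl_sign ?oppr_eq0 oner_eq0. Qed.

Theorem corollary4p7 (R : realType) (g : vectType R) (br : g -> g -> g)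
    (s : {vspace g}) (N : nat) (dphi : g -> 'M[R]_N) :
  is_lie_bracket br -> is_lie_hom br dphi ->
  forall (eps : bool) (n : nat),
    clifford_rep_in dphi s eps n -> indep_fund_fields dphi s n.
Proof.
move=> _ _ eps n /clifford_rep_anticomm [A [As anticomm]].
exists A; split=> // p p0 c.
exact: (@clifford_mx_free R N n (fun i => dphi (A i)) p _ (anticomm p p0) c
  (cl_sign_neq0 R eps) p0).
Qed.
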